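(* Let $\mathcal G$ be a connected rank-3 tensor Feynman graph as in the context, with $N_{\rm ext}\ge 6$ external legs. Let \[ \omega_{\deg}(\mathcal G)=-(V-1)+\tfrac12F_{\rm int}(\mathcal G). \] Then \[ \omega_{\deg}(\mathcal G)\le-\tfrac1{12}N_{\rm ext}. \]
   Context: Bubbles. Use colors $1,2,3$ for bubble edges and color $0$ for propagator lines. The tetrahedral bubble $\mathbf b_+$ is $K_4$ on $w_1,\dots,w_4$ with the following colored edges: \begin{itemize} \item $w_1w_2$ and $w_3w_4$ of color 1; \item $w_1w_3$ and $w_2w_4$ of color 2; \item $w_1w_4$ and $w_2w_3$ of color 3. \end{itemize} For $c\in\{1,2,3\}$, the melonic bubble $\mathbf b_c$ has vertices $w_1,\dots,w_4$ and the following edges: \begin{itemize} \item $w_1w_2$ doubled, carrying the two colors of $\{1,2,3\}\setminus\{c\}$; \item $w_3w_4$ doubled, carrying the two colors of $\{1,2,3\}\setminus\{c\}$; \item single edges $w_2w_3$ and $w_4w_1$ of color $c$. \end{itemize} Graphs. A graph $\mathcal G$ consists of the following data: \begin{itemize} \item $V=V_++V_m$ interaction vertices (copies of $\mathbf b_+$, resp. of some $\mathbf b_c$); \item $L$ internal color-0 lines joining bubble vertices, each bubble vertex incident to at most one line; \item a color-0 external leg at each bubble vertex not incident to a line. \end{itemize} Let $N_{\rm ext}$ be the number of external legs. The colored extension $\mathcal G_{\rm col}$ is the resulting 4-edge-colored graph. Connected means $\mathcal G_{\rm col}$ is connected. Faces. A face of color $c\in\{1,2,3\}$ is a connected component of the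 subgraph of $\mathcal G_{\rm col}$ formed by the color-0 edges and half-edges and the color-$c$ edges. It is internal if it is a cycle, and external if it is a path between two external legs. $F_{\rm int}(\mathcal G)$ is the number of internal faces. *)

From mathcomp Require Import all_boot all_order all_algebra.
Set Implicit Arguments. Unset Strict Implicit. Unset Printing Implicit Defensive.

(* Colors 1,2,3 of bubble edges are encoded by c : 'I_3, standing for color c+1.
   Color 0 (propagator lines and external legs) is handled separately.
   Bubble vertices w_1..w_4 are encoded by 'I_4 (w_k ~ k-1).
   A bubble type is an option 'I_3: None = tetrahedral b_+,
   Some c = melonic bubble b_(c+1). *)

Definition bubble_type := option 'I_3.

Definition bubble_edges (b : bubble_type) (c : 'I_3) : seq (nat * nat) :=
  match b with
  | None =>
      match val c with
      | 0 => [:: (0, 1); (2, 3)]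
      | 1 => [:: (0, 2); (1, 3)]
      | _ => [:: (0, 3); (1, 2)]
      end
  | Some m =>
      if c == m then [:: (1, 2); (3, 0)]
      else [:: (0, 1); (2, 3)]
  end.

Definition bubble_adj (b : bubble_type) (c : 'I_3) (u v : 'I_4) : bool :=
  (((u : nat), (v : nat)) \in bubble_edges b c)
  || (((v : nat), (u : nat)) \in bubble_edges b c).

(* A graph with V interaction bubbles. Bubble vertices: ('I_V * 'I_4).
   [line x = Some y] means an internal color-0 line joins x and y;
   [line x = None] means x carries an external leg. *)
Record feyn_graph (V : nat) := FeynGraph {
  kind : 'I_V -> bubble_type;
  line : ('I_V * 'I_4) -> option ('I_V * 'I_4);
  line_sym : forall x y, line x = Some y -> line y = Some x;
  line_irr : forall x y, line x = Some y -> x <> y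
}.

Section Graphs.
Variables (V : nat) (G : feyn_graph V).
Local Notation T := ('I_V * 'I_4)%type.

Definition col_edge (c : 'I_3) (x y : T) : bool :=
  (x.1 == y.1) && bubble_adj (kind G x.1) c x.2 y.2.

Definition line_edge (x y : T) : bool := line G x == Some y.

Definition gcol_rel (x y : T) : bool := [exists c, col_edge c x y] || line_edge x y.

Definition connected_graph : Prop := forall x y : T, connect gcol_rel x y.

Definition N_ext : nat := #|[set x : T | line G x == None]|.

Definition face_rel (c : 'I_3) (x y : T) : bool := col_edge c x y || line_edge x y.

(* x lies on an internal face of color c+1: its component contains no
   external leg (hence it is a cycle) *)
Definition on_internal_face (c : 'I_3) (x : T) : bool :=
  [forall y, connect (face_rel c) x y ==> (line G y != None)].

Definition F_int_col (c : 'I_3) : nat :=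
  #|[set [set y | connect (face_rel c) x y] | x in [set x | on_internal_face c x]]|.

Definition F_int : nat := \sum_(c < 3) F_int_col c.

End Graphs.

Local Open Scope ring_scope.
Definition omega_deg (V : nat) (G : feyn_graph V) : rat :=
  - (V%:Q - 1) + (F_int G)%:Q / 2.

From mathcomp Require Import all_boot all_order all_algebra.
From mathcomp Require Import zify lra.
Import Order.TTheory GRing.Theory Num.Theory.

Set Implicit Arguments.
Unset Strict Implicit.
Unset Printing Implicit Defensive.

(* The heart of the matter is [F_int + N_ext <= 2 V + 2] for a connected graph with an
   external leg; then [omega_deg <= 2 - N_ext / 2 <= - N_ext / 12] as soon as [N_ext >= 6].
   Without internal faces this is the spanning-tree count: a connected graph has at least
   [V - 1] lines, so [N_ext <= 4 V - 2 (V - 1)].  Otherwise some vertex [x] lies on an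
   internal face of one color but not of another (if every vertex were on all internal faces
   or on none, connectivity would spread internality from an internal face to an external
   leg).  Cutting the line at [x] into two external legs raises [N_ext] by 2, lowers [F_int]
   by at most 2, and keeps the graph connected, since the rest of the internal face still
   joins the two ends; so induction applies. *)

Lemma path_closed_all (T : Type) (e : rel T) (K : {pred T}) :
  (forall a b, a \in K -> e a b -> b \in K) ->
  forall a p, a \in K -> path e a p -> all K (a :: p).
Proof.
move=> clK a p; elim: p a => [|b p IHp] a aK /=; first by rewrite andbT.
by case/andP=> eab /(IHp b (clK a b aK eab)) Kbp; apply/andP.
Qed.

Lemma connect_closed_pred (T : finType) (e : rel T) (K : {pred T}) :
  (forall a b, a \in K -> e a b -> b \in K) ->
  forall a b, connect e a b -> a \in K -> b \in K.
Proof.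
move=> clK a _ /connectP[p pth ->] aK.
by have /allP := path_closed_all clK aK pth; apply; apply: mem_last.
Qed.

Lemma eq_connect_closed (T : finType) (e e' : rel T) (K : {pred T}) :
  (forall a b, a \in K -> e a b -> b \in K) -> {in K, forall a, e' a =1 e a} ->
  {in K, forall a, connect e' a =1 connect e a}.
Proof.
move=> clK ee' a aK b; have clK' c d : c \in K -> e' c d -> d \in K.
  by move=> cK; rewrite ee' //; apply: clK.
have ee'K : {in K &, e' =2 e} by move=> c d cK _; apply: ee'.
apply/connectP/connectP=> -[p pth ->]; exists p => //.
  by rewrite -(eq_in_path ee'K) // (path_closed_all clK' aK).
by rewrite (eq_in_path ee'K) // (path_closed_all clK aK).
Qed.

Lemma connect_descent (T : finType) (e : rel T) (r : T) :
  (forall x, connect e r x) ->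
  exists d : T -> nat, forall x, x != r -> exists2 y, e y x & d y < d x.
Proof.
move=> conn_r; pose F (S : {set T}) := r |: [set x | [exists y in S, e y x]].
have F_mono : {homo F : S S' / S \subset S'}.
  move=> S S' sSS'; apply/subsetP=> x; rewrite !inE => /orP[-> //|].
  by case/existsP=> y /andP[yS eyx]; apply/orP; right; apply/existsP; exists y;
    rewrite (subsetP sSS') ?eyx.
have FK := fixsetK F_mono.
have fix_all x : x \in fixset F.
  apply: connect_closed_pred (conn_r x) _; last by rewrite -FK !inE eqxx.
  by move=> a b aF eab; rewrite -FK !inE; apply/orP; right; apply/existsP; exists a;
    rewrite aF.
(* The depth of [x] is the stage at which it enters the breadth-first search from [r]. *)
exists (fix_order F) => x xr.
have := in_iter_fix_orderE F x; have := fix_order_gt0 F x; rewrite fix_all.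
case: (fix_order F x) => // k _ /=; rewrite !inE (negPf xr) /= => /existsP[y].
by case/andP=> yk eyx; exists y; rewrite // ltnS (fix_order_small F_mono yk).
Qed.

Lemma even_card_fixfree_involution (T : finType) (f : T -> T) (S : {set T}) :
  {in S, forall a, f a \in S} -> {in S, involutive f} ->
  {in S, forall a, f a != a} -> ~~ odd #|S|.
Proof.
move=> fS fK fnot; pose A := [set a in S | enum_rank a < enum_rank (f a)].
have AS : A \subset S by apply/subsetP=> a; rewrite inE => /andP[].
have fA : f @: A = S :\: A.
  apply/setP=> b; rewrite !inE; apply/imsetP/idP => [[a] |].
    by rewrite inE => /andP[aS lt_a] ->; rewrite fS // fK // -leqNgt ltnW.
  case/andP=> /negbTE bA bS; rewrite bS /= in bA.
  exists (f b); last by rewrite fK.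
  rewrite inE fS //= fK // ltn_neqAle leqNgt bA andbT.
  by apply: contraNneq (fnot b bS) => /val_inj/enum_rank_inj ->.
have: #|A| + #|f @: A| = #|S| by rewrite fA -(cardsID A S) (setIidPr AS).
rewrite card_in_imset => [<-|a b /(subsetP AS) aS /(subsetP AS) bS eab].
  by rewrite addnn odd_double.
by rewrite -(fK a aS) eab fK.
Qed.

(* The color-[c] neighbour of a vertex inside a bubble, read off [bubble_edges]. *)
Definition bubble_mate (b : bubble_type) (c : 'I_3) (v : 'I_4) : 'I_4 :=
  let swap12 := nth 0 [:: 1; 0; 3; 2] v in
  let swap13 := nth 0 [:: 2; 3; 0; 1] v in
  let swap14 := nth 0 [:: 3; 2; 1; 0] v in
  inord match b with
  | None => match val c with 0 => swap12 | 1 => swap13 | _ => swap14 end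
  | Some m => if c == m then swap14 else swap12
  end.

Lemma bubble_mateP b c v :
  [&& bubble_adj b c v (bubble_mate b c v),
      bubble_mate b c (bubble_mate b c v) == v & bubble_mate b c v != v].
Proof.
case: b => [[[|[|[|m]]] ?]|] //; case: c => [[|[|[|c]]] ?] //;
by case: v => [[|[|[|[|v]]]] ?] //;
  rewrite /bubble_mate /bubble_adj /bubble_edges /= -!val_eqE /= !inordK.
Qed.

Section Graph.
Variable V : nat.
Local Notation T := ('I_V * 'I_4)%type.
Implicit Types (G : feyn_graph V) (c : 'I_3) (w : T).

Definition color_mate G c w : T := (w.1, bubble_mate (kind G w.1) c w.2).

Definition partner G w : T := odflt w (line G w).

Lemma col_edge_mate G c w : col_edge G c w (color_mate G c w).
Proof. by rewrite /col_edge eqxx; case/and3P: (bubble_mateP (kind G w.1) c w.2). Qed.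

Lemma color_mateK G c : involutive (color_mate G c).
Proof.
by case=> b v; rewrite /color_mate /=; case/and3P: (bubble_mateP (kind G b) c v) => _ /eqP->.
Qed.

Lemma color_mate_neq G c w : color_mate G c w != w.
Proof.
case: w => b v; rewrite /color_mate xpair_eqE eqxx /=.
by case/and3P: (bubble_mateP (kind G b) c v).
Qed.

Lemma partnerK G : involutive (partner G).
Proof.
by move=> w; rewrite /partner; case lw: (line G w) => [u|] /=; rewrite ?(line_sym lw) ?lw.
Qed.

Lemma line_partner G w : line G w != None -> line G (partner G w) = Some w.
Proof. by rewrite /partner; case lw: (line G w) => [u|] // _; apply: line_sym. Qed.

Lemma col_edge_sym G c : symmetric (col_edge G c).
Proof.
move=> w u; rewrite /col_edge eq_sym; case: eqP => //= ->.
by rewrite /bubble_adj orbC.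
Qed.

Lemma line_edge_sym G : symmetric (line_edge G).
Proof. by move=> w u; apply/eqP/eqP => /line_sym. Qed.

Lemma face_rel_sym G c : symmetric (face_rel G c).
Proof. by move=> w u; rewrite /face_rel col_edge_sym line_edge_sym. Qed.

Lemma gcol_rel_sym G : symmetric (gcol_rel G).
Proof.
move=> w u; rewrite /gcol_rel line_edge_sym; congr orb.
by apply: eq_existsb => c; rewrite col_edge_sym.
Qed.

Lemma face_rel_gcol_rel G c : subrel (face_rel G c) (gcol_rel G).
Proof.
move=> w u /orP[ce|le]; last by rewrite /gcol_rel le orbT.
by apply/orP; left; apply/existsP; exists c.
Qed.

Lemma internal_face_line G c w : on_internal_face G c w -> line G w != None.
Proof. by move/forallP/(_ w)/implyP; apply. Qed.

Lemma internal_face_connect G c w u :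
  on_internal_face G c w -> connect (face_rel G c) w u -> on_internal_face G c u.
Proof.
move=> /forallP int_w wu; apply/forallP => z; apply/implyP => uz.
exact: (implyP (int_w z)) (connect_trans wu uz).
Qed.

Lemma card_lined_add_N_ext G : #|[set w | line G w != None]| + N_ext G = 4 * V.
Proof.
have := cardsC [set w | line G w == None]; rewrite card_prod !card_ord mulnC => <-.
by rewrite addnC /N_ext; congr (_ + _); apply: eq_card => w; rewrite !inE.
Qed.

Lemma N_ext_le G : N_ext G <= 4 * V.
Proof. by rewrite -(card_lined_add_N_ext G) leq_addl. Qed.

Section RemoveLine.
Variables (G : feyn_graph V) (x y : T).
Hypothesis xy_line : line G x = Some y.

Let yx_line : line G y = Some x. Proof. exact: line_sym. Qed.

Let neq_xy : x != y. Proof. by apply/eqP; apply: line_irr xy_line. Qed.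

Definition rem_line_fun w := if (w == x) || (w == y) then None else line G w.

Lemma rem_line_sym w u : rem_line_fun w = Some u -> rem_line_fun u = Some w.
Proof.
rewrite /rem_line_fun; case: ifP => // /norP[wx wy] /line_sym luw.
case: ifP => // /orP[] /eqP uxy; move: luw; rewrite uxy ?xy_line ?yx_line => -[wxy].
  by rewrite wxy eqxx in wy.
by rewrite wxy eqxx in wx.
Qed.

Lemma rem_line_irr w u : rem_line_fun w = Some u -> w <> u.
Proof. by rewrite /rem_line_fun; case: ifP => // _; apply: line_irr. Qed.

Definition rem_line : feyn_graph V :=
  @FeynGraph V (kind G) rem_line_fun rem_line_sym rem_line_irr.

Lemma N_ext_rem_line : N_ext rem_line = N_ext G + 2.
Proof.
rewrite /N_ext.
have -> : [set w | line rem_line w == None] = [set x; y] :|: [set w | line G w == None].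
  by apply/setP => w; rewrite !inE /= /rem_line_fun; case: ifP.
rewrite cardsU cards2 neq_xy addnC.
suff -> : [set x; y] :&: [set w | line G w == None] = set0 by rewrite cards0 subn0.
by apply/setP => w; rewrite !inE; apply/negbTE/andP => -[/pred2P[]-> ];
  rewrite ?xy_line ?yx_line.
Qed.

Section Color.
Variable c : 'I_3.
Local Notation fr := (face_rel G c).
Local Notation fr' := (face_rel rem_line c).

Lemma face_rel_rem_line w u : fr' w u -> fr w u.
Proof.
case/orP=> [ce|]; first by apply/orP; left.
rewrite /line_edge /= /rem_line_fun.
by case: ifP => // _ lwu; rewrite /face_rel /line_edge lwu orbT.
Qed.

Let off_x w := ~~ connect fr x w.

Let off_x_closed w u : off_x w -> fr w u -> off_x u.
Proof.
move=> wx wu; apply: contra wx => xu; apply: connect_trans xu _.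
by rewrite (sym_connect_sym (face_rel_sym G c)) connect1.
Qed.

Let off_x_line w : off_x w -> rem_line_fun w = line G w.
Proof.
move=> wx; have fr_xy : connect fr x y.
  by rewrite connect1 // /face_rel /line_edge xy_line eqxx orbT.
rewrite /rem_line_fun; case: eqP => [wx'|_]; first by rewrite /off_x wx' connect0 in wx.
by case: eqP => [wy|//]; rewrite /off_x wy fr_xy in wx.
Qed.

Lemma connect_rem_line_off w : off_x w -> connect fr' w =1 connect fr w.
Proof.
apply: (eq_connect_closed (K := off_x)) => [|u ux v]; first exact: off_x_closed.
by rewrite /face_rel /line_edge /= off_x_line.
Qed.

Lemma internal_face_rem_line_off w :
  off_x w -> on_internal_face rem_line c w = on_internal_face G c w.
Proof.
move=> wx; apply: eq_forallb => u; rewrite connect_rem_line_off //.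
case: (boolP (connect fr w u)) => //= wu.
by rewrite /= off_x_line //; apply: (connect_closed_pred (K := off_x)) wu wx.
Qed.

Lemma F_int_col_rem_line : F_int_col G c <= F_int_col rem_line c + on_internal_face G c x.
Proof.
pose face e w := [set u | connect e w u].
set I := [set w | on_internal_face G c w].
set I' := [set w | on_internal_face rem_line c w].
have sub : face fr @: I \subset
           face fr' @: I' :|: (if on_internal_face G c x then [set face fr x] else set0).
  apply/subsetP => S /imsetP[w]; rewrite inE => int_w ->; rewrite inE.
  have [xw|wx] := boolP (connect fr x w).
    have int_x : on_internal_face G c x.
      by apply: internal_face_connect int_w _; rewrite (sym_connect_sym (face_rel_sym G c)).
    rewrite int_x inE; apply/orP; right; apply/eqP/setP => u; rewrite !inE.
    by rewrite (same_connect (sym_connect_sym (face_rel_sym G c)) xw).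
  apply/orP; left; apply/imsetP; exists w; first by rewrite inE internal_face_rem_line_off.
  by apply/setP => u; rewrite !inE connect_rem_line_off.
apply: leq_trans (subset_leq_card sub) _; apply: leq_trans (leq_card_setU _ _) _.
by rewrite leq_add2l; case: (on_internal_face G c x); rewrite ?cards1 ?cards0.
Qed.

End Color.

Lemma F_int_rem_line : (exists c, ~~ on_internal_face G c x) -> F_int G <= F_int rem_line + 2.
Proof.
case=> c0 ext_c0.
have : F_int G <= F_int rem_line + \sum_(c < 3) on_internal_face G c x.
  by rewrite /F_int -big_split /=; apply: leq_sum => c _; apply: F_int_col_rem_line.
move/leq_trans; apply; rewrite leq_add2l (bigD1 c0) //= (negPf ext_c0) add0n.
apply: leq_trans (_ : \sum_(c < 3 | c != c0) 1 <= 2).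
  exact: leq_sum (fun c _ => leq_b1 _).
by rewrite sum1_card cardC1 card_ord.
Qed.

Lemma rem_line_face_xy c : on_internal_face G c x -> connect (face_rel rem_line c) x y.
Proof.
(* Otherwise in the component [C] of [x] every vertex but [x] has exactly one color-[c]
   edge and one line: the color matching pairs up [C], the lines pair up [C :\ x]. *)
move=> int_x; apply: contraT => not_xy.
set C := [set w | connect (face_rel rem_line c) x w].
have xC : x \in C by rewrite inE.
have C_line w : w \in C -> line G w != None.
  rewrite inE => xw; apply: internal_face_line (internal_face_connect int_x _).
  by apply: connect_sub xw => a b /face_rel_rem_line/connect1.
have C_even : ~~ odd #|C|.
  apply: (even_card_fixfree_involution (f := color_mate G c)) => [w||w _].
  - rewrite !inE => xw; apply: connect_trans xw (connect1 _).
    by apply/orP; left; apply: col_edge_mate.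
  - by move=> w _; apply: color_mateK.
  - exact: color_mate_neq.
have C_rem_line w : w \in C :\ x -> exists2 u, line rem_line w = Some u & u \in C :\ x.
  rewrite !inE => /andP[wx xw].
  have wy : w != y by apply: contraNneq not_xy => <-.
  have := C_line w; rewrite inE => /(_ xw).
  case lw: (line G w) => [u|] // _.
  have lw' : rem_line_fun w = Some u by rewrite /rem_line_fun (negPf wx) (negPf wy).
  exists u => //; rewrite !inE; apply/andP; split.
    by apply/eqP => ux; move: (rem_line_sym lw'); rewrite ux /rem_line_fun eqxx.
  by apply: connect_trans xw (connect1 _); rewrite /face_rel /line_edge /= lw' eqxx orbT.
have C'_even : ~~ odd #|C :\ x|.
  apply: (even_card_fixfree_involution (f := partner rem_line)) => w /C_rem_line[u lw uC].
  - by rewrite /partner lw.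
  - by rewrite /partner lw /= (rem_line_sym lw).
  - by rewrite /partner lw; apply/eqP => uw; apply: (rem_line_irr lw).
by move: C_even; rewrite (cardsD1 x C) xC /= C'_even.
Qed.

Lemma connected_rem_line :
  connected_graph G -> (exists c, on_internal_face G c x) -> connected_graph rem_line.
Proof.
move=> conn_G [c int_x] a b; apply: connect_sub (conn_G a b) => u v.
have gcol_xy : connect (gcol_rel rem_line) x y.
  by apply: connect_sub (rem_line_face_xy int_x) => w z /face_rel_gcol_rel/connect1.
have gcol_yx : connect (gcol_rel rem_line) y x.
  by rewrite (sym_connect_sym (gcol_rel_sym rem_line)).
case/orP=> [ce|/eqP luv]; first by apply: connect1; apply/orP; left.
have [/eqP ux|nux] := boolP (u == x); first by move: luv; rewrite ux xy_line => -[<-].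
have [/eqP uy|nuy] := boolP (u == y); first by move: luv; rewrite uy yx_line => -[<-].
apply: connect1; rewrite /gcol_rel /line_edge /= /rem_line_fun.
by rewrite (negPf nux) (negPf nuy) luv eqxx orbT.
Qed.

End RemoveLine.

(* Every bubble but a root is entered, in a breadth-first search, through a line from a
   shallower bubble; these lines are distinct, so there are at least [V - 1] of them. *)
Lemma N_ext_connected_le G : connected_graph G -> N_ext G <= 2 * V + 2.
Proof.
move=> conn_G; have [V0|V_gt0] := posnP V.
  by apply: leq_trans (N_ext_le G) _; rewrite V0.
pose r : 'I_V := Ordinal V_gt0.
pose bond b b' := [exists w, [&& line G w != None, w.1 == b & (partner G w).1 == b']].
have conn_bond b : connect bond r b.
  pose K := [pred w : T | connect bond r w.1].
  suff: (b, ord0) \in K by []; apply: (connect_closed_pred (K := K)) (conn_G (r, ord0) _) _;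
    last exact: connect0.
  move=> w u; rewrite !inE /= => wK /orP[/existsP[c /andP[/eqP <- _]] // | /eqP lwu].
  apply: connect_trans wK (connect1 _); apply/existsP; exists w.
  by rewrite lwu /partner lwu !eqxx.
have [d d_desc] := connect_descent conn_bond.
set X := [set w | (line G w != None) && (d (partner G w).1 < d w.1)].
have card_X : V.-1 <= #|X|.
  have : [set~ r] \subset fst @: X.
    apply/subsetP => b; rewrite !inE => /d_desc[b' /existsP[w]].
    case/and3P=> lw /eqP <- /eqP <- lt_d; apply/imsetP; exists (partner G w) => //.
    by rewrite inE line_partner // partnerK.
  move/subset_leq_card; rewrite cardsC1 card_ord => /leq_trans; apply.
  exact: leq_imset_card.
have card_pX : #|partner G @: X| = #|X| := card_imset _ (can_inj (partnerK G)).
have disj : X :&: partner G @: X = set0.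
  apply/setP => w; rewrite !inE; apply/negbTE/andP => -[/andP[_ lt_w] /imsetP[u]].
  rewrite inE => /andP[_ lt_u] wu; move: lt_w lt_u; rewrite wu partnerK.
  by move=> lt1 /(ltn_trans lt1); rewrite ltnn.
have sub : X :|: partner G @: X \subset [set w | line G w != None].
  apply/subsetP => w; rewrite !inE => /orP[/andP[-> _] // | /imsetP[u]].
  by rewrite inE => /andP[lu _] ->; rewrite line_partner.
have := subset_leq_card sub; rewrite cardsU disj cards0 subn0 card_pX.
have := card_lined_add_N_ext G; lia.
Qed.

Lemma exists_mixed_line G : connected_graph G -> 0 < N_ext G -> 0 < F_int G ->
  exists x y, [/\ line G x = Some y, exists c, on_internal_face G c x
                & exists c, ~~ on_internal_face G c x].
Proof.
move=> conn_G N_gt0 F_gt0.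
have [c [z int_z]] : exists c z, on_internal_face G c z.
  move: F_gt0; rewrite lt0n sum_nat_eq0 => /forallPn[c]; rewrite /F_int_col.
  by rewrite cards_eq0 imset_eq0 => /set0Pn[z]; rewrite inE => int_z; exists c, z.
have /card_gt0P[e] := N_gt0; rewrite inE => /eqP ext_e.
pose K := [pred w | [exists c, on_internal_face G c w]].
have [x Kx] : exists2 x, x \in K & [exists c, ~~ on_internal_face G c x].
  apply/exists_inP; apply: contraT; rewrite negb_exists_in => /forall_inP full.
  have clK w u : w \in K -> gcol_rel G w u -> u \in K.
    move=> /full; rewrite negb_exists => /forallP int_w.
    case/orP=> [/existsP[c' ce] | le]; apply/existsP; [exists c' | exists c];
      apply: internal_face_connect (negbNE (int_w _)) (connect1 _);
      by rewrite /face_rel ?ce ?le ?orbT.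
  have /existsP[c' /internal_face_line] : e \in K.
    by apply: (connect_closed_pred (K := K) clK (conn_G z e)); apply/existsP; exists c.
  by rewrite ext_e.
case/existsP: Kx => c1 /[dup] /internal_face_line.
case lx: (line G x) => [y|] // _ int_x /existsP[c2 ext_x].
by exists x, y; split => //; [exists c1 | exists c2].
Qed.

Lemma F_int_add_N_ext_le G :
  connected_graph G -> 0 < N_ext G -> F_int G + N_ext G <= 2 * V + 2.
Proof.
have [n] := ubnP (4 * V - N_ext G); elim: n G => // n IHn G lt_n conn_G N_gt0.
have [F0|F_gt0] := posnP (F_int G); first by rewrite F0; apply: N_ext_connected_le.
have [x [y [xy_line int_x ext_x]]] := exists_mixed_line conn_G N_gt0 F_gt0.
set G' := rem_line xy_line.
have N_G' : N_ext G' = N_ext G + 2 := N_ext_rem_line xy_line.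
have N_G'_le : N_ext G + 2 <= 4 * V by rewrite -N_G' N_ext_le.
have IH' : F_int G' + N_ext G' <= 2 * V + 2.
  apply: IHn; last by rewrite N_G' addn2.
    by rewrite N_G'; lia.
  exact: connected_rem_line.
have := F_int_rem_line xy_line ext_x; rewrite -/G'; lia.
Qed.

End Graph.

Unset Implicit Arguments.
Set Strict Implicit.
Local Open Scope ring_scope.

Theorem lemma1 (V : nat) (G : feyn_graph V) :
  connected_graph G -> (6 <= N_ext G)%N ->
  omega_deg G <= - ((N_ext G)%:Q / 12).
Proof.
move=> conn_G N_ge6.
have := F_int_add_N_ext_le conn_G (leq_trans (ltn0Sn 5) N_ge6).
rewrite -(ler_nat rat) natrD; move: N_ge6; rewrite -(ler_nat rat) => N_ge6.
rewrite /omega_deg !pmulrn; lra.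
Qed.
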